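(* Let $k\ge2$, $-\frac{\pi}{2}\le\theta_1<\dots<\theta_k\le\frac{\pi}{2}$ and $\hat\theta_1,\dots,\hat\theta_k\in[-\frac{\pi}{2},\frac{\pi}{2}]$, and let $\epsilon>0$. Assume $$\|\eta_{k,k}(\theta_1,\dots,\theta_k,\hat\theta_1,\dots,\hat\theta_k)\|_\infty<\epsilon\quad\text{and}\quad\theta_{\min}=\min_{q\ne j}|\theta_q-\theta_j|\ge\Big(\frac{4\epsilon}{\lambda(k)}\Big)^{1/k}.$$ Then after reordering the $\hat\theta_j$, for all $j=1,\dots,k$, $$|\hat\theta_j-\theta_j|<\frac{\theta_{\min}}{2}\quad\text{and}\quad|\hat\theta_j-\theta_j|\le\frac{2^{k-1}\epsilon}{(k-2)!\,\theta_{\min}^{k-1}}.$$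
   Context: For $z_1,\dots,z_p,\hat z_1,\dots,\hat z_q\in\mathbb C$, $\eta_{p,q}(z_1,\dots,z_p,\hat z_1,\dots,\hat z_q)\in\mathbb R^p$ is the vector whose $j$-th entry is $\prod_{l=1}^q|z_j-\hat z_l|$. For an integer $k\ge1$: $\xi(1)=\frac12$; $\xi(k)=\frac{(\frac{k-1}{2})!(\frac{k-3}{2})!}{4}$ if $k\ge3$ is odd; $\xi(k)=\frac{((\frac{k-2}{2})!)^2}{4}$ if $k$ is even. For $k\ge2$: $\lambda(2)=1$ and $\lambda(k)=\xi(k-2)$ for $k\ge3$. *)

(* Stdlib Reals. Vectors indexed by nat, entries 0..p-1 (0-based). *)
From Stdlib Require Import Reals Lra Lia Arith List.
Open Scope R_scope.

Definition prodR (q : nat) (f : nat -> R) : R :=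
  fold_right Rmult 1 (map f (seq 0 q)).

Definition eta (p q : nat) (z zh : nat -> R) : nat -> R :=
  fun j => prodR q (fun l => Rabs (z j - zh l)).

Definition linf_norm (p : nat) (v : nat -> R) : R :=
  fold_right Rmax 0 (map (fun j => Rabs (v j)) (seq 0 p)).

Definition xi (k : nat) : R :=
  if Nat.eqb k 1 then 1/2
  else if Nat.odd k then
    INR (fact (Nat.div2 (k - 1)) * fact (Nat.div2 (k - 3))) / 4
  else INR (fact (Nat.div2 (k - 2))) ^ 2 / 4.

Definition lambda (k : nat) : R :=
  if Nat.eqb k 2 then 1 else xi (k - 2).

Definition is_min_sep (k : nat) (th : nat -> R) (m : R) : Prop :=
  (exists q j, (q < k)%nat /\ (j < k)%nat /\ q <> j /\ m = Rabs (th q - th j)) /\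
  (forall q j, (q < k)%nat -> (j < k)%nat -> q <> j -> m <= Rabs (th q - th j)).

Definition is_perm (k : nat) (sigma : nat -> nat) : Prop :=
  (forall j, (j < k)%nat -> (sigma j < k)%nat) /\
  (forall i j, (i < k)%nat -> (j < k)%nat -> sigma i = sigma j -> i = j).

From Stdlib Require Import Reals Lra Lia Arith List Permutation.
From mathcomp Require all_boot all_algebra Rstruct.
Open Scope R_scope.

(* Write W z = prod_i (z - th i) and P z = prod_l (z - thh l).  The Lagrange formula
   for P - W at the theta_min-separated nodes th j, where |P| < eps, gives
   |P z - W z| < |W z| whenever z is at distance at least theta_min/2 from all nodes:
   the lower bound on theta_min is exactly what makes the interpolation weights sum
   below 1.  Hence P has the sign of W at th j -+ theta_min/2, where W changes sign,
   so P has a root thh l strictly between them.  Separation makes this matching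
   injective, and dividing the j-th entry of eta by the distances from th j to the
   other matched roots, each at least (|j - m| - 1/2) theta_min, gives the second
   estimate. *)

(** * Finite products and sums *)

Definition sumR (n : nat) (f : nat -> R) : R := fold_right Rplus 0 (map f (seq 0 n)).

Definition prodR_skip (n j : nat) (f : nat -> R) : R :=
  prodR n (fun i => if Nat.eqb i j then 1 else f i).

Lemma prodR_S n f : prodR (S n) f = prodR n f * f n.
Proof.
  unfold prodR. rewrite seq_S, map_app, fold_right_app. simpl.
  induction (map f (seq 0 n)) as [|a l IH]; simpl; [ring|]. rewrite IH. ring.
Qed.

Lemma sumR_S n f : sumR (S n) f = sumR n f + f n.
Proof.
  unfold sumR. rewrite seq_S, map_app, fold_right_app. simpl.
  induction (map f (seq 0 n)) as [|a l IH]; simpl; [ring|]. rewrite IH. ring.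
Qed.

Lemma prodR_ext n f g : (forall i, (i < n)%nat -> f i = g i) -> prodR n f = prodR n g.
Proof.
  induction n as [|n IH]; intros H; [reflexivity|].
  rewrite !prodR_S, IH, H; auto.
Qed.

Lemma sumR_ext n f g : (forall i, (i < n)%nat -> f i = g i) -> sumR n f = sumR n g.
Proof.
  induction n as [|n IH]; intros H; [reflexivity|].
  rewrite !sumR_S, IH, H; auto.
Qed.

Lemma prodR_mult n f g : prodR n (fun i => f i * g i) = prodR n f * prodR n g.
Proof.
  induction n as [|n IH]; [unfold prodR; simpl; ring|].
  rewrite !prodR_S, IH. ring.
Qed.

Lemma prodR_div n f g : prodR n (fun i => f i / g i) = prodR n f / prodR n g.
Proof.
  induction n as [|n IH]; [unfold prodR; simpl; field|].
  rewrite !prodR_S, IH. unfold Rdiv. rewrite Rinv_mult. ring.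
Qed.

Lemma prodR_abs n f : Rabs (prodR n f) = prodR n (fun i => Rabs (f i)).
Proof.
  induction n as [|n IH]; [apply Rabs_R1|].
  rewrite !prodR_S, Rabs_mult, IH. reflexivity.
Qed.

Lemma prodR_nonneg n f : (forall i, (i < n)%nat -> 0 <= f i) -> 0 <= prodR n f.
Proof.
  induction n as [|n IH]; intros H; [unfold prodR; simpl; lra|].
  rewrite prodR_S. apply Rmult_le_pos; auto.
Qed.

Lemma prodR_pos n f : (forall i, (i < n)%nat -> 0 < f i) -> 0 < prodR n f.
Proof.
  induction n as [|n IH]; intros H; [unfold prodR; simpl; lra|].
  rewrite prodR_S. apply Rmult_lt_0_compat; auto.
Qed.

Lemma prodR_le n f g : (forall i, (i < n)%nat -> 0 <= f i <= g i) -> prodR n f <= prodR n g.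
Proof.
  induction n as [|n IH]; intros H; [unfold prodR; simpl; lra|]. rewrite !prodR_S.
  destruct (H n) as [Hf Hfg]; [lia|].
  apply Rmult_le_compat; [|exact Hf| |exact Hfg].
  - apply prodR_nonneg. intros i Hi. apply H. lia.
  - apply IH. intros i Hi. apply H. lia.
Qed.

Lemma prodR_neg n f : prodR n f < 0 -> exists i, (i < n)%nat /\ f i < 0.
Proof.
  induction n as [|n IH]; intros H; [unfold prodR in H; simpl in H; lra|].
  rewrite prodR_S in H. destruct (Rlt_or_le (f n) 0) as [Hn|Hn].
  - exists n. split; [lia|exact Hn].
  - destruct IH as [i [Hi Hfi]]; [nra|]. exists i. split; [lia|exact Hfi].
Qed.

Lemma prodR_perm n sigma f : is_perm n sigma -> prodR n (fun m => f (sigma m)) = prodR n f.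
Proof.
  intros [Hrange Hinj]. unfold prodR. rewrite <- (map_map sigma f).
  assert (Hp : Permutation (map sigma (seq 0 n)) (seq 0 n)).
  { apply NoDup_Permutation_bis.
    - apply NoDup_map_NoDup_ForallPairs; [|apply seq_NoDup].
      intros a b Ha Hb. apply in_seq in Ha, Hb. apply Hinj; lia.
    - rewrite length_map. lia.
    - intros a Ha. apply in_map_iff in Ha as [m [<- Hm]]. apply in_seq in Hm.
      apply in_seq. specialize (Hrange m). lia. }
  induction (Permutation_map f Hp); simpl; auto; try congruence; ring.
Qed.

Lemma prodR_skip_spec n j f : (j < n)%nat -> prodR n f = f j * prodR_skip n j f.
Proof.
  unfold prodR_skip. induction n as [|n IH]; intros Hj; [lia|]. rewrite !prodR_S.
  destruct (Nat.eq_dec j n) as [->|Hne].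
  - rewrite Nat.eqb_refl, (prodR_ext n (fun i => if Nat.eqb i n then 1 else f i) f); [ring|].
    intros i Hi. destruct (Nat.eqb_spec i n); [lia|reflexivity].
  - rewrite IH by lia. destruct (Nat.eqb_spec n j); [lia|ring].
Qed.

Lemma prodR_skip_abs n j f : Rabs (prodR_skip n j f) = prodR_skip n j (fun i => Rabs (f i)).
Proof.
  unfold prodR_skip. rewrite prodR_abs. apply prodR_ext. intros i _.
  destruct (Nat.eqb i j); [apply Rabs_R1|reflexivity].
Qed.

Lemma prodR_skip_div n j f g :
  prodR_skip n j (fun i => f i / g i) = prodR_skip n j f / prodR_skip n j g.
Proof.
  unfold prodR_skip. rewrite <- prodR_div. apply prodR_ext. intros i _.
  destruct (Nat.eqb i j); [field|reflexivity].
Qed.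

Lemma prodR_skip_le n j f g :
  (forall i, (i < n)%nat -> i <> j -> 0 <= f i <= g i) -> prodR_skip n j f <= prodR_skip n j g.
Proof.
  intros H. apply prodR_le. intros i Hi. destruct (Nat.eqb_spec i j); [lra|auto].
Qed.

Lemma sumR_le n f g : (forall i, (i < n)%nat -> f i <= g i) -> sumR n f <= sumR n g.
Proof.
  induction n as [|n IH]; intros H; [unfold sumR; simpl; lra|]. rewrite !sumR_S.
  apply Rplus_le_compat; auto.
Qed.

Lemma sumR_lt n f g : (0 < n)%nat -> (forall i, (i < n)%nat -> f i < g i) -> sumR n f < sumR n g.
Proof.
  destruct n as [|n]; intros Hn H; [lia|]. rewrite !sumR_S.
  apply Rplus_le_lt_compat; auto. apply sumR_le. intros i Hi. left. auto.
Qed.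

Lemma sumR_abs n f : Rabs (sumR n f) <= sumR n (fun i => Rabs (f i)).
Proof.
  induction n as [|n IH]; [unfold sumR; simpl; rewrite Rabs_R0; lra|]. rewrite !sumR_S.
  eapply Rle_trans; [apply Rabs_triang|]. lra.
Qed.

Lemma sumR_scal n c f : sumR n (fun i => c * f i) = c * sumR n f.
Proof.
  induction n as [|n IH]; [unfold sumR; simpl; ring|]. rewrite !sumR_S, IH. ring.
Qed.

(** * Lagrange interpolation *)

Module Interpolation.
Import all_boot all_algebra Rstruct.
Import GRing.Theory.
Local Open Scope ring_scope.

Section Lagrange.
Variables (F : fieldType) (I : eqType) (s : seq I) (x y : I -> F).
Hypotheses (s_uniq : uniq s) (x_inj : {in s &, injective x}).

Let P : {poly F} := \prod_(l <- s) ('X - (y l)%:P).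
Let W : {poly F} := \prod_(i <- s) ('X - (x i)%:P).
Let L j : {poly F} :=
  (\prod_(i <- s | i != j) (x j - x i))^-1 *: \prod_(i <- s | i != j) ('X - (x i)%:P).

Let hornerP z : P.[z] = \prod_(l <- s) (z - y l).
Proof. by rewrite horner_prod; apply: eq_bigr => l _; rewrite hornerXsubC. Qed.

Let hornerW z : W.[z] = \prod_(i <- s) (z - x i).
Proof. by rewrite horner_prod; apply: eq_bigr => i _; rewrite hornerXsubC. Qed.

Let hornerL j z : (L j).[z] = \prod_(i <- s | i != j) ((z - x i) / (x j - x i)).
Proof.
rewrite hornerZ horner_prod prodf_div mulrC.
by congr (_ / _); apply: eq_bigr => i _; rewrite hornerXsubC.
Qed.

Let L_sample j m : j \in s -> m \in s -> (L j).[x m] = (j == m)%:R.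
Proof.
move=> js ms; rewrite hornerL; have [<-|ne] := eqVneq j m.
  rewrite big1_seq // => i /andP[ij iS]; rewrite divff // subr_eq0.
  by apply: contraNneq ij => /x_inj ->.
by rewrite big_mkcond (bigD1_seq m) //= eq_sym ne subrr !mul0r.
Qed.

Let size_L j : j \in s -> (size (L j) <= size s)%N.
Proof.
move=> js; apply: leq_trans (size_scale_leq _ _) _.
rewrite -big_filter size_prod_XsubC size_filter.
by rewrite -(count_predC (pred1 j)) -add1n leq_add2r -has_count has_pred1.
Qed.

Let size_PsubW : (size (P - W)%R <= size s)%N.
Proof.
have sP : size P = (size s).+1 by rewrite size_prod_XsubC.
have sW : size W = (size s).+1 by rewrite size_prod_XsubC.
apply/leq_sizeP => i; rewrite leq_eqVlt coefB => /orP[/eqP <-|lt].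
  by move: (lead_coef_prod_XsubC s predT y) (lead_coef_prod_XsubC s predT x);
     rewrite !lead_coefE -/P -/W sP sW /= => -> ->; rewrite subrr.
by rewrite !nth_default ?subrr // ?sP ?sW.
Qed.

(* P - W has degree below size s, so it is its own interpolant at the x i. *)
Lemma lagrange_prod_XsubC z :
  \prod_(l <- s) (z - y l) - \prod_(i <- s) (z - x i) =
  \sum_(j <- s) (\prod_(l <- s) (x j - y l)) *
                \prod_(i <- s | i != j) ((z - x i) / (x j - x i)).
Proof.
have Q0 : P - W - \sum_(j <- s) P.[x j] *: L j = 0.
  apply: (@roots_geq_poly_eq0 _ _ (map x s)); last 1 first.
  - rewrite size_map; apply: leq_trans (size_polyD _ _) _.
    rewrite geq_max size_polyN size_PsubW /=.
    apply: (leq_trans (size_sum _ _ _)); apply/bigmax_leqP_seq => j js _.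
    by apply: leq_trans (size_scale_leq _ _) _; exact: size_L.
  - apply/allP => _ /mapP[m ms ->].
    rewrite /root !hornerE horner_sum (bigD1_seq m) //= hornerZ L_sample // eqxx.
    rewrite big1_seq ?mulr1 ?addr0; last first.
      by move=> j /andP[jm js]; rewrite hornerZ L_sample // (negbTE jm) mulr0.
    by rewrite hornerW (bigD1_seq m) //= subrr mul0r subr0 subrr.
  - by rewrite map_inj_in_uniq.
have := congr1 (horner^~ z) Q0; rewrite /= !hornerE horner_sum hornerP hornerW.
move/eqP; rewrite subr_eq0 => /eqP ->; apply: eq_bigr => j _.
by rewrite hornerZ hornerL hornerP.
Qed.

End Lagrange.

Lemma prodR_iota n f : prodR n f = \prod_(i <- iota 0 n) f i.
Proof.
rewrite /prodR; elim: n 0%N => [|n IH] a; first by rewrite big_nil.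
by rewrite /= big_cons IH.
Qed.

Lemma sumR_iota n f : sumR n f = \sum_(i <- iota 0 n) f i.
Proof.
rewrite /sumR; elim: n 0%N => [|n IH] a; first by rewrite big_nil.
by rewrite /= big_cons IH.
Qed.

Lemma prodR_skip_iota n j f : prodR_skip n j f = \prod_(i <- iota 0 n | i != j) f i.
Proof.
rewrite /prodR_skip prodR_iota [RHS]big_mkcond; apply: eq_bigr => i _.
by rewrite if_neg; case: Nat.eqb_spec => [->|/eqP/negbTE ->]; rewrite ?eqxx.
Qed.

Local Close Scope ring_scope.

Lemma lagrange_prodR n (x y : nat -> R) z :
  (forall i j, (i < n)%coq_nat -> (j < n)%coq_nat -> x i = x j -> i = j) ->
  prodR n (fun l => z - y l) - prodR n (fun i => z - x i) =
  sumR n (fun j => prodR n (fun l => x j - y l) *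
                   prodR_skip n j (fun i => (z - x i) / (x j - x i))).
Proof.
move=> x_inj; have inj : {in iota 0 n &, injective x}.
  by move=> i j; rewrite !mem_iota /= => /ltP hi /ltP hj; exact: x_inj.
rewrite !prodR_iota sumR_iota; under [RHS]eq_bigr do rewrite prodR_iota prodR_skip_iota.
exact: (lagrange_prod_XsubC _ _ _ x y (iota_uniq 0 n) inj z).
Qed.

End Interpolation.

(** * Products over distances between indices *)

Definition nat_dist (i j : nat) : nat := (i - j) + (j - i).

Lemma prodR_rev n f : prodR n (fun m => f (n - 1 - m)%nat) = prodR n f.
Proof.
  apply (prodR_perm n (fun m => n - 1 - m)%nat f).
  split; intros; lia.
Qed.

Lemma prodR_skip_dist n j h : (j < n)%nat ->
  prodR_skip n j (fun m => h (nat_dist j m)) =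
  prodR j (fun d => h (S d)) * prodR (n - 1 - j) (fun d => h (S d)).
Proof.
  intros Hj. replace n with (S j + (n - 1 - j))%nat at 1 by lia.
  induction (n - 1 - j)%nat as [|b IH].
  - rewrite Nat.add_0_r. unfold prodR_skip.
    rewrite prodR_S, Nat.eqb_refl, <- (prodR_rev j (fun d => h (S d))).
    unfold prodR at 3. simpl. rewrite !Rmult_1_r. apply prodR_ext.
    intros m Hm. destruct (Nat.eqb_spec m j); [lia|]. f_equal. unfold nat_dist. lia.
  - rewrite Nat.add_succ_r. unfold prodR_skip in *. rewrite !prodR_S, IH.
    destruct (Nat.eqb_spec (S j + b) j); [lia|].
    replace (nat_dist j (S j + b)) with (S b) by (unfold nat_dist; lia). ring.
Qed.

Lemma prodR_fact_pow a t : prodR a (fun d => INR (S d) * t) = INR (fact a) * t ^ a.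
Proof.
  induction a as [|a IH]; [unfold prodR; simpl; ring|].
  rewrite prodR_S, IH, fact_simpl, mult_INR. simpl. ring.
Qed.

Lemma prodR_skip_dist_fact k j t : (j < k)%nat ->
  prodR_skip k j (fun m => INR (nat_dist j m) * t) = INR (fact j) * INR (fact (k - 1 - j)) * t ^ (k - 1).
Proof.
  intros Hj. rewrite (prodR_skip_dist k j (fun d => INR d * t) Hj), !prodR_fact_pow.
  replace (t ^ (k - 1)) with (t ^ j * t ^ (k - 1 - j)) by (rewrite <- pow_add; f_equal; lia).
  ring.
Qed.

Definition odd_fact (a : nat) : R := prodR a (fun d => 2 * INR d + 1).

Lemma odd_fact_pos a : 0 < odd_fact a.
Proof. apply prodR_pos. intros d _. pose proof (pos_INR d). lra. Qed.

Lemma prodR_odd_fact_pow a t : prodR a (fun d => (INR (S d) - / 2) * t) = odd_fact a * (t / 2) ^ a.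
Proof.
  induction a as [|a IH]; [unfold odd_fact, prodR; simpl; ring|].
  unfold odd_fact in *. rewrite !prodR_S, IH, S_INR. simpl. field.
Qed.

(* Induction on a + b, peeling the largest odd factor off the larger side. *)
Lemma fact_le_odd_fact_mul a b : INR (fact (a + b - 1)) <= odd_fact a * odd_fact b.
Proof.
  remember (a + b)%nat as n eqn:Hn. revert a b Hn.
  induction n as [|n IH]; intros a b Hn.
  - destruct a, b; try lia. unfold odd_fact, prodR. simpl. lra.
  - assert (Hstep : forall a b, (S n = a + b)%nat -> (a <= b)%nat ->
                    INR (fact (S n - 1)) <= odd_fact a * odd_fact b).
    { clear a b Hn. intros a b Hn Hab. destruct b as [|b]; [lia|].
      unfold odd_fact at 2. rewrite prodR_S. fold (odd_fact b).
      specialize (IH a b ltac:(lia)).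
      pose proof (odd_fact_pos a). pose proof (odd_fact_pos b).
      replace (S n - 1)%nat with n by lia.
      assert (Hfact : INR (fact n) <= (2 * INR b + 1) * INR (fact (n - 1))).
      { destruct n as [|n].
        - simpl. pose proof (pos_INR b). lra.
        - replace (S n - 1)%nat with n by lia. rewrite fact_simpl, mult_INR.
          apply Rmult_le_compat_r; [apply pos_INR|].
          assert (Hle : (S n <= 2 * b + 1)%nat) by lia. apply le_INR in Hle.
          rewrite plus_INR, mult_INR in Hle. simpl (INR 2) in Hle. simpl (INR 1) in Hle. lra. }
      pose proof (pos_INR b). nra. }
    destruct (le_lt_dec a b).
    + apply Hstep; assumption.
    + rewrite Rmult_comm. apply Hstep; lia.
Qed.

Lemma prodR_skip_half_dist_ge k j t : (j < k)%nat -> 0 <= t ->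
  INR (fact (k - 2)) * (t / 2) ^ (k - 1) <= prodR_skip k j (fun m => (INR (nat_dist j m) - / 2) * t).
Proof.
  intros Hj Ht. rewrite (prodR_skip_dist k j (fun d => (INR d - / 2) * t) Hj), !prodR_odd_fact_pow.
  pose proof (fact_le_odd_fact_mul j (k - 1 - j)) as Hodd.
  replace (j + (k - 1 - j) - 1)%nat with (k - 2)%nat in Hodd by lia.
  replace ((t / 2) ^ (k - 1)) with ((t / 2) ^ j * (t / 2) ^ (k - 1 - j))
    by (rewrite <- pow_add; f_equal; lia).
  replace (odd_fact j * (t / 2) ^ j * (odd_fact (k - 1 - j) * (t / 2) ^ (k - 1 - j)))
    with (odd_fact j * odd_fact (k - 1 - j) * ((t / 2) ^ j * (t / 2) ^ (k - 1 - j))) by ring.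
  apply Rmult_le_compat_r; [|exact Hodd].
  apply Rmult_le_pos; apply pow_le; lra.
Qed.

Lemma sumR_inv_fact_mul n : (0 < n)%nat ->
  sumR n (fun j => / (INR (fact j) * INR (fact (n - 1 - j)))) = 2 ^ (n - 1) / INR (fact (n - 1)).
Proof.
  intros Hn. destruct n as [|n]; [lia|]. replace (S n - 1)%nat with n by lia.
  assert (Hsum : forall m f, sumR (S m) f = sum_f_R0 f m).
  { induction m as [|m IH]; intros f.
    - unfold sumR. simpl. ring.
    - rewrite sumR_S, IH. reflexivity. }
  replace 2 with (1 + 1) by ring. rewrite binomial, <- Hsum.
  unfold Rdiv. rewrite Rmult_comm, <- sumR_scal. apply sumR_ext. intros i Hi.
  unfold C. rewrite !pow1.
  pose proof (INR_fact_lt_0 n). pose proof (INR_fact_lt_0 i).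
  pose proof (INR_fact_lt_0 (n - i)). field. lra.
Qed.

Lemma pow_pred_mul x n : (0 < n)%nat -> x ^ n = x * x ^ (n - 1).
Proof. intros Hn. destruct n as [|n]; [lia|]. simpl. rewrite Nat.sub_0_r. reflexivity. Qed.

Definition lagrange_weight (k : nat) (t : R) (j : nat) : R :=
  2 / (INR (fact j) * INR (fact (k - 1 - j)) * t ^ k).

Lemma lagrange_weight_pos k t j : 0 < t -> 0 < lagrange_weight k t j.
Proof.
  intros Ht. unfold lagrange_weight. pose proof (INR_fact_lt_0 j).
  pose proof (INR_fact_lt_0 (k - 1 - j)). pose proof (pow_lt t k Ht).
  apply Rdiv_lt_0_compat; [lra|]. apply Rmult_lt_0_compat; [apply Rmult_lt_0_compat|]; lra.
Qed.

Lemma sumR_lagrange_weight k t : (0 < k)%nat -> t <> 0 ->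
  sumR k (lagrange_weight k t) = 2 ^ k / (INR (fact (k - 1)) * t ^ k).
Proof.
  intros Hk Ht. pose proof (pow_nonzero t k Ht).
  rewrite (sumR_ext k _ (fun j => 2 / t ^ k * / (INR (fact j) * INR (fact (k - 1 - j))))).
  - rewrite sumR_scal, sumR_inv_fact_mul, (pow_pred_mul 2 k) by assumption.
    pose proof (INR_fact_lt_0 (k - 1)). field. lra.
  - intros j _. unfold lagrange_weight. pose proof (INR_fact_lt_0 j).
    pose proof (INR_fact_lt_0 (k - 1 - j)). field. repeat split; lra.
Qed.

(** * The separation threshold *)

Lemma fact_sq_pow4_le n : (fact n * fact n * 4 ^ n <= fact (2 * n + 1))%nat.
Proof.
  induction n as [|n IH]; [simpl; lia|].
  replace (2 * S n + 1)%nat with (S (S (2 * n + 1))) by lia.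
  rewrite !fact_simpl, Nat.pow_succ_r'. nia.
Qed.

(* The witness is (n!)^2 4^n for k = 2n+4 and 2 (n+1) (n!)^2 4^n for k = 2n+5,
   both bounded through (n!)^2 4^n <= (2n+1)!. *)
Lemma lambda_mul_pow2 k : (2 <= k)%nat ->
  exists m, lambda k * 2 ^ (k - 2) = INR m /\ (0 < m <= fact (k - 1))%nat.
Proof.
  intros Hk.
  destruct (Nat.eq_dec k 2) as [->|H2].
  { exists 1%nat. unfold lambda. simpl. split; [ring|lia]. }
  destruct (Nat.eq_dec k 3) as [->|H3].
  { exists 1%nat. unfold lambda, xi. simpl. split; [field|lia]. }
  assert (Hxi : lambda k = xi (k - 2)).
  { unfold lambda. destruct (Nat.eqb_spec k 2); [lia|reflexivity]. }
  rewrite Hxi. unfold xi.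
  destruct (Nat.Even_or_Odd k) as [[m Hm]|[m Hm]]; set (n := (m - 2)%nat).
  - replace (k - 2)%nat with (2 * n + 2)%nat by lia.
    replace (Nat.eqb (2 * n + 2) 1) with false by (symmetry; apply Nat.eqb_neq; lia).
    replace (Nat.odd (2 * n + 2)) with false by (rewrite Nat.odd_add, Nat.odd_mul; reflexivity).
    replace (2 * n + 2 - 2)%nat with (2 * n)%nat by lia. rewrite Nat.div2_double.
    exists (fact n * fact n * 4 ^ n)%nat. split.
    + rewrite !mult_INR, pow_INR, pow_add, pow_mult. replace (INR 4) with (2 ^ 2) by (simpl; ring). field.
    + pose proof (lt_O_fact n). pose proof (Nat.pow_nonzero 4 n ltac:(lia)).
      pose proof (fact_sq_pow4_le n). pose proof (fact_le (2 * n + 1) (k - 1) ltac:(lia)). nia.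
  - replace (k - 2)%nat with (2 * n + 3)%nat by lia.
    replace (Nat.eqb (2 * n + 3) 1) with false by (symmetry; apply Nat.eqb_neq; lia).
    replace (Nat.odd (2 * n + 3)) with true by (rewrite Nat.odd_add, Nat.odd_mul; reflexivity).
    replace (2 * n + 3 - 1)%nat with (2 * S n)%nat by lia.
    replace (2 * n + 3 - 3)%nat with (2 * n)%nat by lia. rewrite !Nat.div2_double.
    exists (2 * S n * (fact n * fact n * 4 ^ n))%nat. split.
    + rewrite fact_simpl, !mult_INR, pow_INR, pow_add, pow_mult. replace (INR 4) with (2 ^ 2) by (simpl; ring). rewrite S_INR. simpl (INR 2). field.
    + pose proof (lt_O_fact n). pose proof (Nat.pow_nonzero 4 n ltac:(lia)).
      pose proof (fact_sq_pow4_le n).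
      replace (k - 1)%nat with (S (S (S (2 * n + 1)))) by lia. rewrite !fact_simpl. nia.
Qed.

Lemma Rpower_inv_le_pow a t k : 0 < a -> (0 < k)%nat -> Rpower a (/ INR k) <= t -> a <= t ^ k.
Proof.
  intros Ha Hk Hat.
  assert (Hpos : 0 < Rpower a (/ INR k)) by apply exp_pos.
  replace a with (Rpower a (/ INR k) ^ k) at 1.
  - apply pow_incr. lra.
  - rewrite <- Rpower_pow by exact Hpos. rewrite Rpower_mult, Rinv_l.
    + apply Rpower_1, Ha.
    + apply not_0_INR. lia.
Qed.

Lemma eps_pow2_le_fact k eps t : (2 <= k)%nat -> 0 < eps ->
  Rpower (4 * eps / lambda k) (/ INR k) <= t ->
  0 < t /\ eps * 2 ^ k <= INR (fact (k - 1)) * t ^ k.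
Proof.
  intros Hk Heps Ht.
  destruct (lambda_mul_pow2 k Hk) as [m [Hm [Hm0 Hmk]]].
  assert (H2 : 0 < 2 ^ (k - 2)) by (apply pow_lt; lra).
  assert (Hlam : 0 < lambda k).
  { apply lt_INR in Hm0. simpl in Hm0. rewrite <- Hm in Hm0. nra. }
  assert (Hpos : 0 < Rpower (4 * eps / lambda k) (/ INR k)) by apply exp_pos.
  split; [lra|].
  assert (Hpow : 4 * eps / lambda k <= t ^ k).
  { apply Rpower_inv_le_pow; [|lia|exact Ht]. apply Rdiv_lt_0_compat; lra. }
  assert (Hfact : lambda k * 2 ^ (k - 2) <= INR (fact (k - 1))) by (rewrite Hm; apply le_INR, Hmk).
  assert (Htk : 0 <= t ^ k) by (apply pow_le; lra).
  replace (2 ^ k) with (4 * 2 ^ (k - 2))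
    by (replace k with (2 + (k - 2))%nat at 2 by lia; rewrite pow_add; simpl; ring).
  apply (Rmult_le_compat_r (lambda k)) in Hpow; [|lra].
  replace (4 * eps / lambda k * lambda k) with (4 * eps) in Hpow by (field; lra).
  nra.
Qed.

(** * Matching the nodes with the roots *)

Lemma sorted_gap_dist k (x : nat -> R) t :
  (forall i, (S i < k)%nat -> t <= x (S i) - x i) ->
  forall i j, (i < k)%nat -> (j < k)%nat -> INR (nat_dist i j) * t <= Rabs (x i - x j).
Proof.
  intros Hgap.
  assert (Hle : forall i j, (i <= j)%nat -> (j < k)%nat -> INR (j - i) * t <= x j - x i).
  { intros i j Hij Hj. induction j as [|j IH].
    - assert (i = 0%nat) by lia. subst i. simpl. lra.
    - destruct (Nat.eq_dec i (S j)) as [->|Hne].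
      + rewrite Nat.sub_diag. simpl. lra.
      + replace (S j - i)%nat with (S (j - i)) by lia. rewrite S_INR.
        specialize (IH ltac:(lia) ltac:(lia)). specialize (Hgap j Hj). lra. }
  intros i j Hi Hj. unfold nat_dist. destruct (le_lt_dec i j) as [Hij|Hji].
  - replace (i - j + (j - i))%nat with (j - i)%nat by lia.
    rewrite Rabs_minus_sym. specialize (Hle i j Hij Hj). pose proof (Rle_abs (x j - x i)). lra.
  - replace (i - j + (j - i))%nat with (i - j)%nat by lia.
    specialize (Hle j i ltac:(lia) Hi). pose proof (Rle_abs (x i - x j)). lra.
Qed.

Lemma linf_norm_ge p v j : (j < p)%nat -> Rabs (v j) <= linf_norm p v.
Proof.
  unfold linf_norm. intros Hj. assert (Hin : In j (seq 0 p)) by (apply in_seq; lia).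
  induction (seq 0 p) as [|a l IH]; simpl in *; [tauto|].
  destruct Hin as [->|Hin].
  - apply Rmax_l.
  - eapply Rle_trans; [apply IH, Hin|apply Rmax_r].
Qed.

Lemma eta_entry_lt k x y eps : linf_norm k (eta k k x y) < eps ->
  forall j, (j < k)%nat -> prodR k (fun l => Rabs (x j - y l)) < eps.
Proof.
  intros Hlinf j Hj. pose proof (linf_norm_ge k (eta k k x y) j Hj) as H.
  change (eta k k x y j) with (prodR k (fun l => Rabs (x j - y l))) in H.
  rewrite Rabs_right in H; [lra|].
  apply Rle_ge, prodR_nonneg. intros l _. apply Rabs_pos.
Qed.

Lemma finite_choice (P : nat -> nat -> Prop) n :
  (forall j, (j < n)%nat -> exists l, P j l) -> exists f, forall j, (j < n)%nat -> P j (f j).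
Proof.
  induction n as [|n IH]; intros H.
  - exists (fun _ => 0%nat). intros; lia.
  - destruct IH as [f Hf]; [intros; apply H; lia|].
    destruct (H n ltac:(lia)) as [l Hl].
    exists (fun j => if Nat.eqb j n then l else f j). intros j Hj.
    destruct (Nat.eqb_spec j n) as [->|Hne]; [exact Hl|]. apply Hf. lia.
Qed.

Lemma mul_pos_of_abs_sub_lt a b : Rabs (a - b) < Rabs b -> 0 < a * b.
Proof.
  unfold Rabs. destruct (Rcase_abs b), (Rcase_abs (a - b)); intros; nra.
Qed.

Section Localization.

Variables (k : nat) (x y : nat -> R) (t eps : R).
Hypothesis t_pos : 0 < t.
Hypothesis x_sep : forall i j, (i < k)%nat -> (j < k)%nat ->
  INR (nat_dist i j) * t <= Rabs (x i - x j).
Hypothesis eta_lt : forall j, (j < k)%nat -> prodR k (fun l => Rabs (x j - y l)) < eps.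

Let W (z : R) : R := prodR k (fun i => z - x i).
Let P (z : R) : R := prodR k (fun l => z - y l).

Lemma x_sep_neq i j : (i < k)%nat -> (j < k)%nat -> i <> j -> t <= Rabs (x i - x j).
Proof.
  intros Hi Hj Hij. pose proof (x_sep i j Hi Hj).
  assert (1 <= INR (nat_dist i j)) by (apply (le_INR 1); unfold nat_dist; lia). nra.
Qed.

Lemma lagrange_basis_bound z j : (forall i, (i < k)%nat -> t / 2 <= Rabs (z - x i)) -> (j < k)%nat ->
  Rabs (prodR_skip k j (fun i => (z - x i) / (x j - x i))) <= Rabs (W z) * lagrange_weight k t j.
Proof.
  intros Hz Hj.
  rewrite prodR_skip_div. unfold Rdiv at 1. rewrite Rabs_mult, Rabs_inv, !prodR_skip_abs.
  set (N := prodR_skip k j (fun i => Rabs (z - x i))).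
  set (D := prodR_skip k j (fun i => Rabs (x j - x i))).
  set (Dlow := INR (fact j) * INR (fact (k - 1 - j)) * t ^ (k - 1)).
  assert (HD : Dlow <= D).
  { unfold Dlow. rewrite <- (prodR_skip_dist_fact k j t Hj). apply prodR_skip_le.
    intros m Hm _. split; [apply Rmult_le_pos; [apply pos_INR|lra]|]. apply x_sep; assumption. }
  pose proof (INR_fact_lt_0 j). pose proof (INR_fact_lt_0 (k - 1 - j)).
  pose proof (pow_lt t (k - 1) t_pos).
  assert (HD0 : 0 < Dlow) by (unfold Dlow; apply Rmult_lt_0_compat; [apply Rmult_lt_0_compat|]; lra).
  assert (HN : N <= Rabs (W z) * (2 / t)).
  { unfold W. rewrite prodR_abs, (prodR_skip_spec k j _ Hj). fold N.
    specialize (Hz j Hj). assert (0 <= N).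
    { apply prodR_nonneg. intros i _. destruct (Nat.eqb i j); [lra|apply Rabs_pos]. }
    apply (Rmult_le_reg_l (t / 2)); [lra|]. field_simplify; nra. }
  replace (Rabs (W z) * lagrange_weight k t j) with (Rabs (W z) * (2 / t) * / Dlow).
  2:{ unfold lagrange_weight, Dlow. rewrite (pow_pred_mul t k) by lia. field. repeat split; lra. }
  apply Rmult_le_compat; [apply prodR_nonneg| |exact HN|].
  - intros i _. destruct (Nat.eqb i j); [lra|apply Rabs_pos].
  - left. apply Rinv_0_lt_compat. lra.
  - apply Rinv_le_contravar; assumption.
Qed.

Lemma matching_error_le sigma : is_perm k sigma ->
  (forall j, (j < k)%nat -> Rabs (x j - y (sigma j)) < t / 2) ->
  forall j, (j < k)%nat ->
  Rabs (x j - y (sigma j)) <= 2 ^ (k - 1) * eps / (INR (fact (k - 2)) * t ^ (k - 1)).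
Proof.
  intros Hperm Hclose j Hj.
  set (B := prodR_skip k j (fun m => Rabs (x j - y (sigma m)))).
  assert (HdB : Rabs (x j - y (sigma j)) * B < eps).
  { unfold B. rewrite <- (prodR_skip_spec k j (fun m => Rabs (x j - y (sigma m))) Hj).
    rewrite (prodR_perm k sigma (fun l => Rabs (x j - y l)) Hperm). apply eta_lt, Hj. }
  set (F := INR (fact (k - 2)) * (t / 2) ^ (k - 1)).
  assert (HF : 0 < F).
  { apply Rmult_lt_0_compat; [apply INR_fact_lt_0|apply pow_lt; lra]. }
  assert (HB : F <= B).
  { apply Rle_trans with (prodR_skip k j (fun m => (INR (nat_dist j m) - / 2) * t)).
    { apply prodR_skip_half_dist_ge; [exact Hj|lra]. }
    apply prodR_skip_le. intros m Hm Hne.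
    assert (1 <= INR (nat_dist j m)) by (apply (le_INR 1); unfold nat_dist; lia).
    split; [nra|].
    pose proof (x_sep j m Hj Hm). pose proof (Hclose m Hm).
    pose proof (Rabs_triang (x j - y (sigma m)) (y (sigma m) - x m)) as Htri.
    replace (x j - y (sigma m) + (y (sigma m) - x m)) with (x j - x m) in Htri by ring.
    rewrite (Rabs_minus_sym (y (sigma m))) in Htri. lra. }
  assert (Hd : Rabs (x j - y (sigma j)) * F <= eps).
  { pose proof (Rabs_pos (x j - y (sigma j))). nra. }
  replace (2 ^ (k - 1) * eps / (INR (fact (k - 2)) * t ^ (k - 1))) with (eps / F).
  - apply (Rmult_le_reg_r F); [exact HF|]. unfold Rdiv. rewrite Rmult_assoc, Rinv_l, Rmult_1_r; lra.
  - unfold F, Rdiv. rewrite Rpow_mult_distr, pow_inv.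
    pose proof (INR_fact_lt_0 (k - 2)). pose proof (pow_lt t (k - 1) t_pos).
    pose proof (pow_lt 2 (k - 1) ltac:(lra)). field. lra.
Qed.

Hypothesis k_pos : (0 < k)%nat.
Hypothesis eps_small : eps * 2 ^ k <= INR (fact (k - 1)) * t ^ k.

Lemma interpolation_error_lt z : (forall i, (i < k)%nat -> t / 2 <= Rabs (z - x i)) ->
  Rabs (P z - W z) < Rabs (W z).
Proof.
  intros Hz.
  assert (HW : 0 < Rabs (W z)).
  { unfold W. rewrite prodR_abs. apply prodR_pos. intros i Hi. specialize (Hz i Hi). lra. }
  assert (Hinj : forall i j, (i < k)%nat -> (j < k)%nat -> x i = x j -> i = j).
  { intros i j Hi Hj E. destruct (Nat.eq_dec i j) as [|Hij]; [assumption|].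
    pose proof (x_sep_neq i j Hi Hj Hij) as Hsep. rewrite E, Rminus_diag, Rabs_R0 in Hsep. lra. }
  unfold P, W. rewrite (Interpolation.lagrange_prodR k x y z Hinj). fold (W z).
  eapply Rle_lt_trans; [apply sumR_abs|].
  eapply Rlt_le_trans.
  { apply (sumR_lt k _ (fun j => eps * (Rabs (W z) * lagrange_weight k t j)) k_pos).
    intros j Hj. rewrite Rabs_mult, prodR_abs.
    assert (0 < Rabs (W z) * lagrange_weight k t j).
    { apply Rmult_lt_0_compat; [exact HW|apply lagrange_weight_pos; assumption]. }
    apply Rle_lt_trans with (prodR k (fun l => Rabs (x j - y l)) * (Rabs (W z) * lagrange_weight k t j)).
    - apply Rmult_le_compat_l; [apply prodR_nonneg; intros; apply Rabs_pos|].
      apply lagrange_basis_bound; assumption.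
    - apply Rmult_lt_compat_r; [assumption|]. apply eta_lt, Hj. }
  rewrite sumR_scal, sumR_scal, sumR_lagrange_weight by (assumption || lra).
  pose proof (INR_fact_lt_0 (k - 1)). pose proof (pow_lt t k t_pos).
  apply (Rmult_le_reg_r (INR (fact (k - 1)) * t ^ k)); [apply Rmult_lt_0_compat; assumption|].
  replace (eps * (Rabs (W z) * (2 ^ k / (INR (fact (k - 1)) * t ^ k))) * (INR (fact (k - 1)) * t ^ k))
    with (Rabs (W z) * (eps * 2 ^ k)) by (field; lra).
  apply Rmult_le_compat_l; [lra|exact eps_small].
Qed.

Lemma exists_close_root j0 : (j0 < k)%nat -> exists l, (l < k)%nat /\ Rabs (x j0 - y l) < t / 2.
Proof.
  intros Hj0. set (z1 := x j0 - t / 2). set (z2 := x j0 + t / 2).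
  assert (Hfar : forall i, (i < k)%nat -> i <> j0 -> x i <= x j0 - t \/ x j0 + t <= x i).
  { intros i Hi Hne. pose proof (x_sep_neq i j0 Hi Hj0 Hne) as H.
    unfold Rabs in H. destruct (Rcase_abs (x i - x j0)); lra. }
  assert (Hz : forall z, z = z1 \/ z = z2 -> forall i, (i < k)%nat -> t / 2 <= Rabs (z - x i)).
  { intros z Hzz i Hi. unfold z1, z2 in Hzz.
    destruct (Nat.eq_dec i j0) as [->|Hne]; [|destruct (Hfar i Hi Hne)];
      destruct Hzz as [-> | ->]; unfold Rabs; destruct (Rcase_abs _); lra. }
  assert (HW : W z1 * W z2 < 0).
  { unfold W. rewrite <- prodR_mult, (prodR_skip_spec k j0 _ Hj0).
    assert (Hrest : 0 < prodR_skip k j0 (fun i => (z1 - x i) * (z2 - x i))).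
    { apply prodR_pos. intros i Hi. destruct (Nat.eqb_spec i j0) as [|Hne]; [lra|].
      destruct (Hfar i Hi Hne); unfold z1, z2; nra. }
    replace ((z1 - x j0) * (z2 - x j0)) with (- (t / 2 * (t / 2))) by (unfold z1, z2; ring).
    pose proof (Rmult_lt_0_compat _ _ (Rmult_lt_0_compat (t / 2) (t / 2) ltac:(lra) ltac:(lra)) Hrest).
    lra. }
  pose proof (mul_pos_of_abs_sub_lt _ _ (interpolation_error_lt z1 (Hz z1 (or_introl eq_refl)))) as H1.
  pose proof (mul_pos_of_abs_sub_lt _ _ (interpolation_error_lt z2 (Hz z2 (or_intror eq_refl)))) as H2.
  assert (HP : P z1 * P z2 < 0).
  { pose proof (Rmult_lt_0_compat _ _ H1 H2). nra. }
  unfold P in HP. rewrite <- prodR_mult in HP.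
  destruct (prodR_neg _ _ HP) as [l [Hl Hneg]].
  exists l. split; [exact Hl|]. unfold z1, z2 in Hneg. apply Rabs_def1; nra.
Qed.

Lemma exists_matching :
  exists sigma, is_perm k sigma /\ forall j, (j < k)%nat -> Rabs (x j - y (sigma j)) < t / 2.
Proof.
  destruct (finite_choice (fun j l => (l < k)%nat /\ Rabs (x j - y l) < t / 2) k exists_close_root)
    as [sigma Hsigma].
  exists sigma. split; [split|intros j Hj; apply Hsigma, Hj].
  - intros j Hj. apply Hsigma, Hj.
  - intros i j Hi Hj E. destruct (Nat.eq_dec i j) as [|Hij]; [assumption|exfalso].
    destruct (Hsigma i Hi) as [_ Hci]. destruct (Hsigma j Hj) as [_ Hcj]. rewrite E in Hci.
    pose proof (x_sep_neq i j Hi Hj Hij).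
    pose proof (Rabs_triang (x i - y (sigma j)) (y (sigma j) - x j)) as Htri.
    replace (x i - y (sigma j) + (y (sigma j) - x j)) with (x i - x j) in Htri by ring.
    rewrite Rabs_minus_sym in Hcj. lra.
Qed.

End Localization.

Theorem lemma3p7 (k : nat) (th thh : nat -> R) (eps tmin : R) :
  (2 <= k)%nat ->
  (forall j, (j < k)%nat -> - (PI / 2) <= th j <= PI / 2) ->
  (forall j, (S j < k)%nat -> th j < th (S j)) ->
  (forall j, (j < k)%nat -> - (PI / 2) <= thh j <= PI / 2) ->
  0 < eps ->
  linf_norm k (eta k k th thh) < eps ->
  is_min_sep k th tmin ->
  tmin >= Rpower (4 * eps / lambda k) (/ INR k) ->
  exists sigma : nat -> nat, is_perm k sigma /\
    forall j, (j < k)%nat ->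
      Rabs (thh (sigma j) - th j) < tmin / 2 /\
      Rabs (thh (sigma j) - th j) <=
        2 ^ (k - 1) * eps / (INR (fact (k - 2)) * tmin ^ (k - 1)).
Proof.
  intros Hk _ Hinc _ Heps Hlinf [_ Hmin] Hpow.
  destruct (eps_pow2_le_fact k eps tmin Hk Heps (Rge_le _ _ Hpow)) as [Ht Hsmall].
  assert (Hsep : forall i j, (i < k)%nat -> (j < k)%nat ->
                 INR (nat_dist i j) * tmin <= Rabs (th i - th j)).
  { apply sorted_gap_dist. intros i Hi.
    specialize (Hmin (S i) i Hi ltac:(lia) ltac:(lia)). specialize (Hinc i Hi).
    rewrite Rabs_right in Hmin; lra. }
  pose proof (eta_entry_lt k th thh eps Hlinf) as Heta.
  destruct (exists_matching k th thh tmin eps Ht Hsep Heta ltac:(lia) Hsmall) as [sigma [Hperm Hclose]].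
  exists sigma. split; [exact Hperm|]. intros j Hj. rewrite Rabs_minus_sym. split.
  - apply Hclose, Hj.
  - exact (matching_error_le k th thh tmin eps Ht Hsep Heta sigma Hperm Hclose j Hj).
Qed.
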